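(* Let $w_0\in\mathcal C^2(\mathbb R)$ with $w_0'$ bounded, and assume the limits $w_0'(\pm\infty):=\lim_{x\to\pm\infty}w_0'(x)$ exist and are finite. Let $w$ be a classical solution of problem (P) on $[0,t_* )\times\mathbb R$ (with $(r,\ell)$ of class $\mathcal C^1$). Then for every $t\in[0,t_* )$, $$\lim_{x\to\pm\infty}w_{,x}(t,x)=w_0'(\pm\infty),\qquad \lim_{x\to\pm\infty}w_{,t}(t,x)=0 .$$
   Context: Let $Q(\xi):=\sqrt{1+\xi^2}$ and $L(u):=\int_0^uQ(\xi)\,d\xi=\tfrac12\big(u\sqrt{1+u^2}+\operatorname{arcsinh}u\big)$, a strictly increasing odd bijection of $\mathbb R$. Problem (P) is the Cauchy problem $w_{,tt}-Q^2(w_{,x})\,w_{,xx}=0$ on $[0,\infty)\times\mathbb R$, $w(0,x)=w_0(x)$, $w_{,t}(0,x)=0$, where subscripts after a comma denote partial derivatives. The Riemann invariants are $r:=w_{,t}-L(w_{,x})$, $\ell:=w_{,t}+L(w_{,x})$; with $\eta:=r-\ell$ one has $w_{,x}=L^{-1}(-\eta/2)$, and one sets $k(\eta):=Q(L^{-1}(-\eta/2))$. Then $(r,\ell)$ solves $r_{,t}+k(r-\ell)r_{,x}=0$, $\ell_{,t}-k(r-\ell)\ell_{,x}=0$, with $r(0,x)=r_0(x):=-L(w_0'(x))$, $\ell(0,x)=\ell_0(x):=L(w_0'(x))=-r_0(x)$. $[0,t_* )$ denotes the maximal interval of existence of the $\mathcal C^1$ solution $(r,\ell)$. *)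

From Stdlib Require Import Reals Lra.
From Coquelicot Require Import Coquelicot.
Open Scope R_scope.

Definition Q (xi : R) : R := sqrt (1 + xi ^ 2).

Definition in_dom (T : Rbar) (t : R) : Prop := 0 <= t /\ Rbar_lt t T.

(* derivative of f at t relative to [0,T) (one-sided at t = 0) *)
Definition tderiv (T : Rbar) (f : R -> R) (t l : R) : Prop :=
  filterlim (fun s => (f s - f t) / (s - t))
    (within (fun s => in_dom T s /\ s <> t) (locally t)) (locally l).

Definition cont_on (T : Rbar) (f : R -> R -> R) : Prop :=
  forall t x, in_dom T t ->
  forall eps : R, 0 < eps -> exists delta : R, 0 < delta /\
    forall s y, in_dom T s -> Rabs (s - t) < delta -> Rabs (y - x) < delta ->
      Rabs (f s y - f t x) < eps.

(* w is a classical solution of (P) on [0,T) x R, with w_t = p, w_x = q,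
   and (p,q) (equivalently (r,l)) of class C^1 on [0,T) x R. *)
Definition classical_solution (w0 : R -> R) (T : Rbar)
    (w p q : R -> R -> R) : Prop :=
  (forall t x, in_dom T t -> tderiv T (fun s => w s x) t (p t x)) /\
  (forall t x, in_dom T t -> is_derive (fun y => w t y) x (q t x)) /\
  exists pt px qt qx : R -> R -> R,
    (forall t x, in_dom T t -> tderiv T (fun s => p s x) t (pt t x)) /\
    (forall t x, in_dom T t -> is_derive (fun y => p t y) x (px t x)) /\
    (forall t x, in_dom T t -> tderiv T (fun s => q s x) t (qt t x)) /\
    (forall t x, in_dom T t -> is_derive (fun y => q t y) x (qx t x)) /\
    cont_on T w /\ cont_on T p /\ cont_on T q /\
    cont_on T pt /\ cont_on T px /\ cont_on T qt /\ cont_on T qx /\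
    (* the PDE  w_tt - Q^2(w_x) w_xx = 0 *)
    (forall t x, in_dom T t -> pt t x - (Q (q t x)) ^ 2 * qx t x = 0) /\
    (forall x, w 0 x = w0 x) /\ (forall x, p 0 x = 0).

From Stdlib Require Import Reals Lra ClassicalEpsilon Classical.
From Coquelicot Require Import Coquelicot.
Open Scope R_scope.

(* The Riemann invariants [r = w_t - L(w_x)] and [ℓ = w_t + L(w_x)] are transported with speeds
   [Q(w_x)] and [-Q(w_x)].  If [w_0'] is within [eta] of [v] on [[A, B]], then [r] and [ℓ] stay
   within [2 eps] of [-L(v)] and [L(v)] on the trapezoid [A + c t <= x <= B - c t],
   [c = 2 + |v|].  Indeed, at a first point where the deviation, penalised by [delta * t],
   reaches [3 eps / 2], its one-sided slopes in the backward directions [(-1, c)] and [(-1, -c)]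
   would both be negative; but the transport equation makes the slope in the direction [(-1, k)]
   proportional to [k ± Q(w_x)], which changes sign between [k = c] and [k = -c] since
   [Q(w_x) < c] there.  Then [w_t = (r + ℓ) / 2] and [|w_x - v| <= |L(w_x) - L(v)|] are small.
   The transport equations need [w_tx = w_xt], which is Coquelicot's Schwarz theorem. *)

Lemma is_derive_continuity_pt (f : R -> R) x l : is_derive f x l -> continuity_pt f x.
Proof.
  intros H. apply continuity_pt_filterlim.
  apply (ex_derive_continuous (K := R_AbsRing) (V := R_NormedModule)). now exists l.
Qed.

Lemma MVT_everywhere (f df : R -> R) a b : (forall x, is_derive f x (df x)) ->
  exists c, Rabs (c - a) <= Rabs (b - a) /\ f b - f a = df c * (b - a).
Proof.
  intros Hf. destruct (MVT_gen f a b df) as [c [hc e]].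
  - intros; apply Hf.
  - intros; eapply is_derive_continuity_pt; apply Hf.
  - exists c. split; [|exact e]. revert hc. unfold Rmin, Rmax.
    destruct Rle_dec; intros; unfold Rabs; repeat destruct Rcase_abs; lra.
Qed.

Lemma Rabs_le_of_sum_diff x y d : Rabs (x - y) <= d -> Rabs (x + y) <= d ->
  Rabs x <= d /\ Rabs y <= d.
Proof. unfold Rabs; repeat destruct Rcase_abs; intros; split; lra. Qed.

Lemma signed_le_Rmax_abs sigma x1 x2 : sigma = 1 \/ sigma = -1 ->
  sigma * x1 <= Rmax (Rabs x1) (Rabs x2) /\ sigma * x2 <= Rmax (Rabs x1) (Rabs x2).
Proof.
  intros hs. pose proof (Rmax_l (Rabs x1) (Rabs x2)). pose proof (Rmax_r (Rabs x1) (Rabs x2)).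
  pose proof (Rle_abs x1). pose proof (Rle_abs x2).
  pose proof (Rabs_Ropp x1). pose proof (Rabs_Ropp x2).
  pose proof (Rle_abs (- x1)). pose proof (Rle_abs (- x2)).
  destruct hs as [-> | ->]; split; lra.
Qed.

Lemma Rmax_abs_attained x1 x2 : exists sigma, (sigma = 1 \/ sigma = -1) /\
  (Rmax (Rabs x1) (Rabs x2) = sigma * x1 \/ Rmax (Rabs x1) (Rabs x2) = sigma * x2).
Proof.
  unfold Rmax, Rabs. destruct Rle_dec; repeat destruct Rcase_abs;
    solve [ exists 1; split; [now left | lra] | exists (-1); split; [now right | lra] ].
Qed.

Lemma glb_exists (E : R -> Prop) b : (exists x, E x) -> (forall x, E x -> b <= x) ->
  exists m, b <= m /\ (forall x, E x -> m <= x) /\ (forall u, m < u -> exists x, E x /\ x < u).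
Proof.
  intros [x0 hx0] hb.
  destruct (completeness (fun u => E (- u))) as [m [Hub Hlub]].
  - exists (- b). intros u hu. specialize (hb _ hu). lra.
  - exists (- x0). now rewrite Ropp_involutive.
  - exists (- m). split; [|split].
    + cut (m <= - b); [lra|]. apply Hlub. intros u hu. specialize (hb _ hu). lra.
    + intros x hx. cut (- x <= m); [lra|]. apply Hub. now rewrite Ropp_involutive.
    + intros u hu. apply NNPP. intros hn. cut (m <= - u); [lra|]. apply Hlub.
      intros x hx. apply Rnot_lt_le. intros hlt. apply hn. exists (- x). split; [exact hx|lra].
Qed.

(** * The functions [Q] and [L] *)

Lemma Rabs_le_Q u : Rabs u <= Q u.
Proof. unfold Q. rewrite <- sqrt_Rsqr_abs. apply sqrt_le_1_alt. unfold Rsqr. nra. Qed.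

Lemma Q_ge_1 u : 1 <= Q u.
Proof. unfold Q. rewrite <- sqrt_1 at 1. apply sqrt_le_1_alt. pose proof (pow2_ge_0 u). lra. Qed.

Lemma Q_le_1_plus_abs u : Q u <= 1 + Rabs u.
Proof.
  unfold Q. pose proof (Rabs_pos u).
  rewrite <- (sqrt_square (1 + Rabs u)) by lra. apply sqrt_le_1_alt.
  pose proof (Rsqr_abs u). unfold Rsqr in *. nra.
Qed.

Lemma is_derive_Q u : is_derive Q u (u / Q u).
Proof.
  unfold Q. auto_derive; [nra|].
  replace (u * (u * 1)) with (u ^ 2) by ring.
  field. apply Rgt_not_eq, sqrt_lt_R0. nra.
Qed.

Lemma Q_lipschitz a b : Rabs (Q a - Q b) <= Rabs (a - b).
Proof.
  destruct (MVT_everywhere Q (fun u => u / Q u) b a is_derive_Q) as [c [_ ->]].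
  rewrite Rabs_mult. pose proof (Rabs_pos (a - b)).
  cut (Rabs (c / Q c) <= 1); [nra|].
  pose proof (Q_ge_1 c). unfold Rdiv. rewrite Rabs_mult, Rabs_inv, (Rabs_pos_eq (Q c)) by lra.
  apply (Rmult_le_reg_r (Q c)); [lra|]. rewrite Rmult_assoc, Rinv_l by lra.
  pose proof (Rabs_le_Q c). lra.
Qed.

Lemma continuous_Q u : continuous Q u.
Proof.
  apply (ex_derive_continuous (K := R_AbsRing) (V := R_NormedModule)).
  eexists. apply is_derive_Q.
Qed.

Definition L (u : R) : R := RInt Q 0 u.

Lemma is_derive_L u : is_derive L u (Q u).
Proof.
  apply (is_derive_RInt Q L 0 u); [|apply continuous_Q].
  exists (mkposreal 1 Rlt_0_1). intros y _.
  apply (RInt_correct (V := R_CompleteNormedModule)).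
  apply ex_RInt_continuous. intros; apply continuous_Q.
Qed.

Lemma continuity_pt_L u : continuity_pt L u.
Proof. eapply is_derive_continuity_pt. apply is_derive_L. Qed.

Lemma L_mvt u v : exists xi, Rabs (xi - v) <= Rabs (u - v) /\ L u - L v = Q xi * (u - v).
Proof. exact (MVT_everywhere L Q v u is_derive_L). Qed.

Lemma L_dist_ge u v : Rabs (u - v) <= Rabs (L u - L v).
Proof.
  destruct (L_mvt u v) as [xi [_ ->]]. rewrite Rabs_mult.
  pose proof (Q_ge_1 xi). rewrite (Rabs_pos_eq (Q xi)) by lra.
  pose proof (Rabs_pos (u - v)). nra.
Qed.

Lemma L_dist_le u v : Rabs (L u - L v) <= (1 + Rabs v + Rabs (u - v)) * Rabs (u - v).
Proof.
  destruct (L_mvt u v) as [xi [hxi ->]]. rewrite Rabs_mult.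
  pose proof (Q_ge_1 xi). rewrite (Rabs_pos_eq (Q xi)) by lra.
  pose proof (Q_le_1_plus_abs xi). pose proof (Rabs_pos (u - v)).
  pose proof (Rabs_triang (xi - v) v). replace (xi - v + v) with xi in * by ring.
  nra.
Qed.

Lemma L_taylor u v : Rabs (L u - L v - Q v * (u - v)) <= (u - v) ^ 2.
Proof.
  destruct (L_mvt u v) as [xi [hxi ->]].
  replace (Q xi * (u - v) - Q v * (u - v)) with ((Q xi - Q v) * (u - v)) by ring.
  rewrite Rabs_mult, <- (pow2_abs (u - v)).
  pose proof (Q_lipschitz xi v). pose proof (Rabs_pos (u - v)).
  pose proof (Rabs_pos (Q xi - Q v)). nra.
Qed.

(** * Calculus on [[0, T) x R] *)

Lemma in_dom_le T s s1 : in_dom T s1 -> 0 <= s <= s1 -> in_dom T s.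
Proof. destruct T; intros [h1 h2] hs; split; simpl in *; auto; lra. Qed.

Lemma interior_nbhd T t : 0 < t -> Rbar_lt t T ->
  exists d, 0 < d /\ forall s, Rabs (s - t) < d -> 0 < s /\ Rbar_lt s T.
Proof.
  intros ht. destruct T as [r| |]; simpl; intros hT; try contradiction.
  - exists (Rmin t (r - t)). split; [apply Rmin_pos; lra|].
    intros s hs. pose proof (Rmin_l t (r - t)). pose proof (Rmin_r t (r - t)).
    apply Rabs_def2 in hs. split; lra.
  - exists t. split; [lra|]. intros s hs. apply Rabs_def2 in hs. split; [lra|exact I].
Qed.

Lemma tderiv_eps T f t l : tderiv T f t l -> forall eps, 0 < eps ->
  exists d, 0 < d /\ forall s, in_dom T s -> s <> t -> Rabs (s - t) < d ->
    Rabs ((f s - f t) / (s - t) - l) < eps.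
Proof.
  intros H eps he.
  destruct (H (fun y => Rabs (y - l) < eps)) as [d hd].
  { exists (mkposreal eps he). now intros y hy. }
  exists d. split; [apply cond_pos|]. intros s hs hne hst. now apply (hd s).
Qed.

Lemma tderiv_is_derive T f t l : 0 < t -> Rbar_lt t T -> tderiv T f t l -> is_derive f t l.
Proof.
  intros ht hT H. apply is_derive_Reals. intros eps he.
  destruct (tderiv_eps T f t l H eps he) as [d [hd Hd]].
  destruct (interior_nbhd T t ht hT) as [g [hg Hg]].
  assert (pos : 0 < Rmin d g) by (apply Rmin_pos; lra).
  exists (mkposreal _ pos). simpl. intros h hne hh.
  pose proof (Rmin_l d g). pose proof (Rmin_r d g).
  specialize (Hd (t + h)). replace (t + h - t) with h in Hd by ring.
  destruct (Hg (t + h)) as [h1 h2]; [replace (t + h - t) with h by ring; lra|].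
  apply Hd; [split; [lra|exact h2] | lra | lra].
Qed.

Lemma cont_on_continuity_2d_pt T f t x : cont_on T f -> 0 < t -> Rbar_lt t T ->
  continuity_2d_pt f t x.
Proof.
  intros Cf ht hT eps.
  destruct (Cf t x (conj (Rlt_le _ _ ht) hT) eps (cond_pos eps)) as [d [hd Hd]].
  destruct (interior_nbhd T t ht hT) as [g [hg Hg]].
  exists (mkposreal _ (Rmin_pos d g hd hg)). simpl. intros u v hu hv.
  pose proof (Rmin_l d g). pose proof (Rmin_r d g).
  destruct (Hg u) as [h1 h2]; [lra|]. apply Hd; [split; [lra|exact h2] | lra | lra].
Qed.

Lemma mixed_partials_commute T (w p q px qt : R -> R -> R) :
  (forall t x, in_dom T t -> tderiv T (fun s => w s x) t (p t x)) ->
  (forall t x, in_dom T t -> is_derive (fun y => w t y) x (q t x)) ->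
  (forall t x, in_dom T t -> is_derive (fun y => p t y) x (px t x)) ->
  (forall t x, in_dom T t -> tderiv T (fun s => q s x) t (qt t x)) ->
  cont_on T px -> cont_on T qt ->
  forall t x, 0 < t -> Rbar_lt t T -> px t x = qt t x.
Proof.
  intros Hwt Hwx Hpx Hqt Cpx Cqt t x ht hT.
  set (I s := 0 < s /\ Rbar_lt s T).
  assert (I_dom : forall s, I s -> in_dom T s) by (intros s [h1 h2]; split; [lra|exact h2]).
  assert (I_nbhd : forall s, I s -> locally s I).
  { intros s [h1 h2]. destruct (interior_nbhd T s h1 h2) as [d [hd Hd]].
    exists (mkposreal d hd). exact Hd. }
  assert (Dwt : forall s y, I s -> Derive (fun s => w s y) s = p s y).
  { intros s y [h1 h2]. apply is_derive_unique, (tderiv_is_derive T); auto.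
    apply Hwt, I_dom. split; auto. }
  assert (Dqt : forall s y, I s -> is_derive (fun z => Derive (fun y => w z y) y) s (qt s y)).
  { intros s y [h1 h2]. apply (is_derive_ext_loc (fun z => q z y)).
    - apply (filter_imp I); [|now apply I_nbhd].
      intros z hz. symmetry. apply is_derive_unique, Hwx, I_dom, hz.
    - apply (tderiv_is_derive T); auto. apply Hqt, I_dom. split; auto. }
  assert (Dpx : forall s y, I s -> is_derive (fun z => Derive (fun s => w s z) s) y (px s y)).
  { intros s y hs. apply (is_derive_ext (fun z => p s z)).
    - intros z. symmetry. now apply Dwt.
    - apply Hpx, I_dom, hs. }
  assert (hI : I t) by (split; auto).
  destruct (interior_nbhd T t ht hT) as [d [hd Hd]].
  rewrite <- (is_derive_unique _ _ _ (Dqt t x hI)), <- (is_derive_unique _ _ _ (Dpx t x hI)).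
  symmetry. apply Schwarz.
  - exists (mkposreal d hd). intros u v hu _. specialize (Hd u hu). repeat split.
    + eexists. apply (tderiv_is_derive T); try apply Hd. apply Hwt, I_dom, Hd.
    + eexists. apply Hwx, I_dom, Hd.
    + eexists. now apply Dqt.
    + eexists. now apply Dpx.
  - apply (continuity_2d_pt_ext_loc qt).
    + exists (mkposreal d hd). intros u v hu _. symmetry. apply is_derive_unique, Dqt, Hd, hu.
    + now apply (cont_on_continuity_2d_pt T).
  - apply (continuity_2d_pt_ext_loc px).
    + exists (mkposreal d hd). intros u v hu _. symmetry. apply is_derive_unique, Dpx, Hd, hu.
    + now apply (cont_on_continuity_2d_pt T).
Qed.

Lemma cont_on_comp T f (g : R -> R) : cont_on T f -> (forall u, continuity_pt g u) ->
  cont_on T (fun s y => g (f s y)).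
Proof.
  intros Cf Cg t x hd eps he.
  destruct (proj1 (continuity_pt_filterlim g (f t x)) (Cg _)
    (fun z => Rabs (z - g (f t x)) < eps)) as [d1 hd1].
  { exists (mkposreal eps he). now intros z hz. }
  destruct (Cf t x hd d1 (cond_pos d1)) as [d2 [hd2 H2]].
  exists d2. split; [exact hd2|]. intros s y hs h1 h2. apply hd1, H2; auto.
Qed.

Lemma cont_on_lipschitz2 T f g (phi : R -> R -> R) K : 0 < K -> cont_on T f -> cont_on T g ->
  (forall a b c d, Rabs (phi a b - phi c d) <= K * (Rabs (a - c) + Rabs (b - d))) ->
  cont_on T (fun s y => phi (f s y) (g s y)).
Proof.
  intros hK Cf Cg Hphi t x hd eps he.
  assert (he2 : 0 < eps / (2 * K)) by (apply Rdiv_lt_0_compat; lra).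
  destruct (Cf t x hd _ he2) as [d1 [hd1 H1]]. destruct (Cg t x hd _ he2) as [d2 [hd2 H2]].
  exists (Rmin d1 d2). split; [now apply Rmin_pos|]. intros s y hs h1 h2.
  pose proof (Rmin_l d1 d2). pose proof (Rmin_r d1 d2).
  specialize (H1 s y hs ltac:(lra) ltac:(lra)). specialize (H2 s y hs ltac:(lra) ltac:(lra)).
  eapply Rle_lt_trans; [apply Hphi|].
  replace eps with (K * (eps / (2 * K) + eps / (2 * K))) by (field; lra).
  apply Rmult_lt_compat_l; lra.
Qed.

Lemma cont_on_time T : cont_on T (fun s y => s).
Proof. intros t x hd eps he. exists eps. split; [lra|]. auto. Qed.

(** * One-sided slopes *)

Definition right_slope (g : R -> R) (D : R) : Prop :=
  forall e, 0 < e -> exists h0, 0 < h0 /\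
    forall h, 0 < h < h0 -> Rabs (g h - g 0 - h * D) <= e * h.

Lemma right_slope_ext g g' D D' : (forall h, g h = g' h) -> D = D' ->
  right_slope g D -> right_slope g' D'.
Proof.
  intros Hg <- H e he. destruct (H e he) as [h0 [hh0 Hh]].
  exists h0. split; [exact hh0|]. intros h hh. rewrite <- !Hg. now apply Hh.
Qed.

Lemma right_slope_lin g1 g2 D1 D2 a : right_slope g1 D1 -> right_slope g2 D2 ->
  right_slope (fun h => g1 h + a * g2 h) (D1 + a * D2).
Proof.
  intros H1 H2 e he. set (K := 1 + Rabs a). pose proof (Rabs_pos a).
  assert (he' : 0 < e / (2 * K)) by (apply Rdiv_lt_0_compat; unfold K; lra).
  destruct (H1 _ he') as [h1 [hh1 Hh1]]. destruct (H2 _ he') as [h2 [hh2 Hh2]].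
  exists (Rmin h1 h2). split; [now apply Rmin_pos|]. intros h hh.
  pose proof (Rmin_l h1 h2). pose proof (Rmin_r h1 h2).
  specialize (Hh1 h ltac:(lra)). specialize (Hh2 h ltac:(lra)).
  replace (g1 h + a * g2 h - (g1 0 + a * g2 0) - h * (D1 + a * D2))
    with ((g1 h - g1 0 - h * D1) + a * (g2 h - g2 0 - h * D2)) by ring.
  eapply Rle_trans; [apply Rabs_triang|]. rewrite Rabs_mult.
  assert (hK : e / (2 * K) * h * K = e / 2 * h) by (field; unfold K; lra).
  pose proof (Rabs_pos (g2 h - g2 0 - h * D2)). unfold K in *. nra.
Qed.

Lemma right_slope_scal g D a : right_slope g D -> right_slope (fun h => a * g h) (a * D).
Proof.
  intros H e he. pose proof (Rabs_pos a).
  destruct (H (e / (Rabs a + 1))) as [h0 [hh0 Hh]]; [apply Rdiv_lt_0_compat; lra|].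
  exists h0. split; [exact hh0|]. intros h hh. specialize (Hh h hh).
  replace (a * g h - a * g 0 - h * (a * D)) with (a * (g h - g 0 - h * D)) by ring.
  rewrite Rabs_mult.
  assert (Rabs a * (e / (Rabs a + 1)) <= e).
  { apply (Rmult_le_reg_r (Rabs a + 1)); [lra|].
    replace (Rabs a * (e / (Rabs a + 1)) * (Rabs a + 1)) with (Rabs a * e) by (field; lra). nra. }
  assert (Rabs a * Rabs (g h - g 0 - h * D) <= Rabs a * (e / (Rabs a + 1) * h))
    by (apply Rmult_le_compat_l; lra).
  nra.
Qed.

Lemma right_slope_lipschitz g D : right_slope g D ->
  exists h0, 0 < h0 /\ forall h, 0 < h < h0 -> Rabs (g h - g 0) <= (Rabs D + 1) * h.
Proof.
  intros H. destruct (H 1 Rlt_0_1) as [h0 [hh0 Hh]]. exists h0. split; [exact hh0|].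
  intros h hh. specialize (Hh h hh).
  replace (g h - g 0) with ((g h - g 0 - h * D) + h * D) by ring.
  eapply Rle_trans; [apply Rabs_triang|]. rewrite Rabs_mult, (Rabs_pos_eq h) by lra. lra.
Qed.

Lemma right_slope_L g D : right_slope g D -> right_slope (fun h => L (g h)) (Q (g 0) * D).
Proof.
  intros H e he. destruct (right_slope_lipschitz g D H) as [h1 [hh1 Hh1]].
  set (K := Rabs D + 1). assert (hK : 1 <= K) by (unfold K; pose proof (Rabs_pos D); lra).
  set (e' := e / (2 * Q (g 0))). pose proof (Q_ge_1 (g 0)).
  assert (he' : 0 < e') by (apply Rdiv_lt_0_compat; lra).
  destruct (H e' he') as [h2 [hh2 Hh2]].
  assert (h3p : 0 < e / (2 * K * K)) by (apply Rdiv_lt_0_compat; nra).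
  exists (Rmin (Rmin h1 h2) (e / (2 * K * K))). split; [repeat apply Rmin_pos; lra|].
  intros h hh. pose proof (Rmin_l (Rmin h1 h2) (e / (2 * K * K))).
  pose proof (Rmin_r (Rmin h1 h2) (e / (2 * K * K))).
  pose proof (Rmin_l h1 h2). pose proof (Rmin_r h1 h2).
  specialize (Hh1 h ltac:(lra)). specialize (Hh2 h ltac:(lra)).
  pose proof (L_taylor (g h) (g 0)) as HT.
  replace (L (g h) - L (g 0) - h * (Q (g 0) * D))
    with ((L (g h) - L (g 0) - Q (g 0) * (g h - g 0)) + Q (g 0) * (g h - g 0 - h * D)) by ring.
  eapply Rle_trans; [apply Rabs_triang|]. rewrite Rabs_mult, (Rabs_pos_eq (Q (g 0))) by lra.
  assert (quad : (g h - g 0) ^ 2 <= e / 2 * h).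
  { rewrite <- pow2_abs. pose proof (Rabs_pos (g h - g 0)).
    assert (e / (2 * K * K) * (K * K) = e / 2) by (field; lra).
    assert (h * (K * K) <= e / 2) by nra.
    fold K in Hh1. nra. }
  assert (Q (g 0) * e' = e / 2) by (unfold e'; field; lra).
  nra.
Qed.

Lemma right_slope_le g D m : right_slope g D ->
  (exists h0, 0 < h0 /\ forall h, 0 < h < h0 -> g h - g 0 <= m * h) -> D <= m.
Proof.
  intros H [h0 [hh0 Hle]]. apply Rnot_lt_le. intros hlt.
  destruct (H ((D - m) / 2) ltac:(lra)) as [h1 [hh1 Hh1]].
  set (h := Rmin h0 h1 / 2). assert (0 < Rmin h0 h1) by (apply Rmin_pos; lra).
  pose proof (Rmin_l h0 h1). pose proof (Rmin_r h0 h1).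
  specialize (Hle h ltac:(unfold h; lra)). specialize (Hh1 h ltac:(unfold h; lra)).
  pose proof (Rle_abs (- (g h - g 0 - h * D))). rewrite Rabs_Ropp in *.
  assert (0 < h) by (unfold h; lra). nra.
Qed.

Section BackwardSlope.
Variables (T : Rbar) (f fx : R -> R -> R) (s1 y1 : R).
Hypotheses (hs1 : in_dom T s1) (hs1_pos : 0 < s1).

Lemma right_slope_backward_time a : tderiv T (fun s => f s y1) s1 a ->
  right_slope (fun h => f (s1 - h) y1) (- a).
Proof.
  intros Ht e he. destruct (tderiv_eps _ _ _ _ Ht e he) as [d [hd Hd]].
  exists (Rmin d s1). split; [now apply Rmin_pos|]. intros h hh.
  pose proof (Rmin_l d s1). pose proof (Rmin_r d s1).
  specialize (Hd (s1 - h)). replace (s1 - h - s1) with (- h) in Hd by ring.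
  rewrite Rminus_0_r.
  replace (f (s1 - h) y1 - f s1 y1 - h * - a)
    with (- h * ((f (s1 - h) y1 - f s1 y1) / - h - a)) by (field; lra).
  rewrite Rabs_mult, Rabs_Ropp, (Rabs_pos_eq h) by lra.
  cut (Rabs ((f (s1 - h) y1 - f s1 y1) / - h - a) < e); [nra|].
  apply Hd; [apply (in_dom_le T _ s1); auto; lra | lra |].
  rewrite Rabs_Ropp, Rabs_pos_eq; lra.
Qed.

Hypotheses (Hfx : forall s y, in_dom T s -> is_derive (fun y => f s y) y (fx s y))
  (Cfx : cont_on T fx).

Lemma right_slope_space_increment v :
  right_slope (fun h => f (s1 - h) (y1 + v * h) - f (s1 - h) y1) (v * fx s1 y1).
Proof.
  intros e he. set (K := Rabs v + 1). pose proof (Rabs_pos v).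
  assert (hK : 0 < K) by (unfold K; lra).
  destruct (Cfx s1 y1 hs1 (e / K)) as [d [hd Hd]]; [now apply Rdiv_lt_0_compat|].
  assert (hdK : 0 < d / K) by now apply Rdiv_lt_0_compat.
  exists (Rmin s1 (d / K)). split; [now apply Rmin_pos|]. intros h hh.
  pose proof (Rmin_l s1 (d / K)). pose proof (Rmin_r s1 (d / K)).
  assert (hdom : in_dom T (s1 - h)) by (apply (in_dom_le T _ s1); auto; lra).
  assert (hhK : h * K < d).
  { replace d with (d / K * K) by (field; lra). apply Rmult_lt_compat_r; lra. }
  destruct (MVT_everywhere (fun y => f (s1 - h) y) (fx (s1 - h)) y1 (y1 + v * h)
    (fun y => Hfx _ y hdom)) as [c [hc ->]].
  replace (y1 + v * h - y1) with (v * h) in * by ring.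
  rewrite Rminus_0_r, Rmult_0_r, Rplus_0_r, Rminus_diag, Rminus_0_r.
  replace (fx (s1 - h) c * (v * h) - h * (v * fx s1 y1))
    with (v * h * (fx (s1 - h) c - fx s1 y1)) by ring.
  rewrite !Rabs_mult, (Rabs_pos_eq h) in * by lra.
  assert (Rabs (fx (s1 - h) c - fx s1 y1) < e / K).
  { apply Hd; [exact hdom | | ].
    - replace (s1 - h - s1) with (- h) by ring. rewrite Rabs_Ropp, Rabs_pos_eq; unfold K in *; nra.
    - unfold K in *. nra. }
  assert (Rabs v * (e / K) <= e).
  { unfold K. apply (Rmult_le_reg_r (Rabs v + 1)); [lra|].
    replace (Rabs v * (e / (Rabs v + 1)) * (Rabs v + 1)) with (Rabs v * e) by (field; lra). nra. }
  assert (Rabs v * h * Rabs (fx (s1 - h) c - fx s1 y1) <= Rabs v * h * (e / K))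
    by (apply Rmult_le_compat_l; nra).
  nra.
Qed.

Lemma right_slope_backward a v : tderiv T (fun s => f s y1) s1 a ->
  right_slope (fun h => f (s1 - h) (y1 + v * h)) (v * fx s1 y1 - a).
Proof.
  intros Ht.
  apply (right_slope_ext
    (fun h => f (s1 - h) y1 + 1 * (f (s1 - h) (y1 + v * h) - f (s1 - h) y1))
    _ (- a + 1 * (v * fx s1 y1))); [intros h; ring | ring |].
  apply right_slope_lin; [now apply right_slope_backward_time | apply right_slope_space_increment].
Qed.

End BackwardSlope.

Section FirstHittingTime.
Variables (T : Rbar) (H : R -> R -> R) (th : R).
Hypothesis CH : cont_on T H.

(* The neighbourhoods given by continuity are made uniform in [y] by compactness of [[A, B]]. *)
Lemma cont_on_below_near_segment s1 A B : in_dom T s1 ->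
  (forall y, A <= y <= B -> H s1 y < th) ->
  exists eta, 0 < eta /\
    forall s y, in_dom T s -> s1 <= s < s1 + eta -> A <= y <= B -> H s y < th.
Proof.
  intros hd Hy.
  assert (ex : forall y, {d : posreal | A <= y <= B -> forall s z, in_dom T s ->
      Rabs (s - s1) < d -> Rabs (z - y) < d -> H s z < th}).
  { intro y. apply constructive_indefinite_description.
    destruct (classic (A <= y <= B)) as [hy|hy].
    - destruct (CH s1 y hd (th - H s1 y)) as [d [hd1 hd2]]; [specialize (Hy y hy); lra|].
      exists (mkposreal d hd1). intros _ s z hs h1 h2.
      specialize (hd2 s z hs h1 h2). apply Rabs_def2 in hd2. lra.
    - exists (mkposreal 1 Rlt_0_1). intro; contradiction. }
  destruct (compactness_value_1d A B (fun y => proj1_sig (ex y))) as [d hd'].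
  exists d. split; [apply cond_pos|]. intros s z hs [hs1 hs2] hz.
  apply NNPP. intro hcon. apply (hd' z hz). intros [y [hy [h1 h2]]].
  apply hcon, (proj2_sig (ex y) hy s z hs); [|exact h1].
  rewrite Rabs_pos_eq; lra.
Qed.

Lemma first_hitting_time A B c s0 y0 : 0 <= c -> in_dom T s0 ->
  (forall y, A <= y <= B -> H 0 y < th) ->
  A + c * s0 <= y0 <= B - c * s0 -> th <= H s0 y0 ->
  exists s1 y1, 0 < s1 <= s0 /\ A + c * s1 <= y1 <= B - c * s1 /\ H s1 y1 = th /\
    forall s y, 0 <= s < s1 -> A + c * s <= y <= B - c * s -> H s y < th.
Proof.
  intros hc hs0 H0 hy0 hth0.
  set (S u := 0 <= u <= s0 /\ exists y, A + c * u <= y <= B - c * u /\ th <= H u y).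
  destruct (glb_exists S 0) as [s1 [hs1 [Hlow Happrox]]].
  { exists s0. split; [split; [apply hs0|lra] | now exists y0]. }
  { now intros u [hu _]. }
  assert (hs1s0 : s1 <= s0) by (apply Hlow; split; [split; [apply hs0|lra] | now exists y0]).
  assert (dom : forall u, 0 <= u <= s0 -> in_dom T u) by (intros; now apply (in_dom_le T _ s0)).
  assert (before : forall u y, 0 <= u < s1 -> A + c * u <= y <= B - c * u -> H u y < th).
  { intros u y hu hy. apply Rnot_le_lt. intros hle.
    assert (hu' : S u) by (split; [lra | now exists y]). specialize (Hlow u hu'). lra. }
  assert (at_s1 : exists y1, A + c * s1 <= y1 <= B - c * s1 /\ th <= H s1 y1).
  { apply NNPP. intros hn.
    destruct (cont_on_below_near_segment s1 (A + c * s1) (B - c * s1) (dom s1 ltac:(lra)))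
      as [eta [heta Heta]].
    { intros y hy. apply Rnot_le_lt. intros hle. apply hn. now exists y. }
    destruct (Happrox (s1 + eta) ltac:(lra)) as [u [[hu [y [hy hth]]] hlt]].
    assert (s1 <= u) by (apply Hlow; split; [exact hu | now exists y]).
    assert (H u y < th) by (apply Heta; [apply dom | | split]; nra).
    lra. }
  destruct at_s1 as [y1 [hy1 hth1]].
  assert (hs1_pos : 0 < s1).
  { destruct (Req_dec s1 0) as [e0|]; [|lra]. rewrite e0 in hy1, hth1.
    specialize (H0 y1 ltac:(lra)). lra. }
  exists s1, y1. repeat split; try lra; [|exact before].
  apply Rle_antisym; [|exact hth1]. apply Rnot_lt_le. intros hlt.
  destruct (CH s1 y1 (dom s1 ltac:(lra)) (H s1 y1 - th)) as [d [hd Hd]]; [lra|].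
  set (u := s1 - Rmin d s1 / 2).
  assert (0 < Rmin d s1) by (now apply Rmin_pos).
  pose proof (Rmin_l d s1). pose proof (Rmin_r d s1).
  assert (H u y1 < th) by (apply before; unfold u; [lra | split; nra]).
  assert (hclose : Rabs (H u y1 - H s1 y1) < H s1 y1 - th).
  { apply Hd; [apply dom; unfold u; lra | | rewrite Rminus_diag, Rabs_R0; lra].
    unfold u. replace (s1 - Rmin d s1 / 2 - s1) with (- (Rmin d s1 / 2)) by ring.
    rewrite Rabs_Ropp, Rabs_pos_eq; lra. }
  apply Rabs_def2 in hclose. lra.
Qed.

End FirstHittingTime.

(** * Riemann invariants *)

(* [riemann_invariant (-1) p q] and [riemann_invariant 1 p q] are the paper's [r] and [ℓ]. *)
Definition riemann_invariant (tau : R) (p q : R -> R -> R) (s y : R) : R :=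
  p s y + tau * L (q s y).

Section RiemannInvariants.
Variables (T : Rbar) (p q pt px qt qx : R -> R -> R).
Hypotheses
  (Hpt : forall t x, in_dom T t -> tderiv T (fun s => p s x) t (pt t x))
  (Hpx : forall t x, in_dom T t -> is_derive (fun y => p t y) x (px t x))
  (Hqt : forall t x, in_dom T t -> tderiv T (fun s => q s x) t (qt t x))
  (Hqx : forall t x, in_dom T t -> is_derive (fun y => q t y) x (qx t x))
  (Cp : cont_on T p) (Cq : cont_on T q) (Cpx : cont_on T px) (Cqx : cont_on T qx)
  (Hpde : forall t x, in_dom T t -> pt t x - Q (q t x) ^ 2 * qx t x = 0)
  (Hsym : forall t x, 0 < t -> Rbar_lt t T -> px t x = qt t x).

Local Notation rinv tau := (riemann_invariant tau p q).

Lemma riemann_invariant_right_slope tau s1 y1 v : tau = 1 \/ tau = -1 ->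
  in_dom T s1 -> 0 < s1 ->
  right_slope (fun h => rinv tau (s1 - h) (y1 + v * h))
    ((v - tau * Q (q s1 y1)) * (px s1 y1 + tau * Q (q s1 y1) * qx s1 y1)).
Proof.
  intros htau hd hs.
  assert (Sp := right_slope_backward T p px s1 y1 hd hs Hpx Cpx _ v (Hpt _ _ hd)).
  assert (Sq := right_slope_L _ _
    (right_slope_backward T q qx s1 y1 hd hs Hqx Cqx _ v (Hqt _ _ hd))).
  refine (right_slope_ext _ _ _ _ (fun h => eq_refl) _ (right_slope_lin _ _ _ _ tau Sp Sq)).
  cbv beta. rewrite Rminus_0_r, Rmult_0_r, Rplus_0_r.
  rewrite <- (Hsym s1 y1 hs (proj2 hd)).
  replace (pt s1 y1) with (Q (q s1 y1) ^ 2 * qx s1 y1) by (pose proof (Hpde s1 y1 hd); lra).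
  destruct htau as [-> | ->]; ring.
Qed.

(* The factor [v - tau * Q] has opposite signs for [v = c] and [v = -c], so the slopes of
   [sigma * rinv tau] along the two backward directions cannot both be negative. *)
Lemma riemann_invariant_no_backward_max tau sigma s1 y1 c delta :
  tau = 1 \/ tau = -1 -> sigma = 1 \/ sigma = -1 ->
  in_dom T s1 -> 0 < s1 -> Q (q s1 y1) < c -> 0 < delta ->
  (forall h v, 0 < h < s1 -> (v = c \/ v = - c) ->
     sigma * rinv tau (s1 - h) (y1 + v * h) + delta * h <= sigma * rinv tau s1 y1) ->
  False.
Proof.
  intros htau hsig hd hs hQ hdelta Hback.
  set (Q0 := Q (q s1 y1)) in *. set (X := px s1 y1 + tau * Q0 * qx s1 y1).
  assert (slope : forall v, (v = c \/ v = - c) -> sigma * ((v - tau * Q0) * X) <= - delta).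
  { intros v hv. apply (right_slope_le (fun h => sigma * rinv tau (s1 - h) (y1 + v * h))).
    - apply right_slope_scal. now apply riemann_invariant_right_slope.
    - exists s1. split; [exact hs|]. intros h hh. specialize (Hback h v hh hv).
      rewrite Rminus_0_r, Rmult_0_r, Rplus_0_r. lra. }
  pose proof (slope c (or_introl eq_refl)). pose proof (slope (- c) (or_intror eq_refl)).
  assert (hQ1 : 1 <= Q0) by apply Q_ge_1.
  destruct htau as [-> | ->]; destruct hsig as [-> | ->]; nra.
Qed.

Lemma cont_on_riemann_invariant tau : cont_on T (rinv tau).
Proof.
  apply (cont_on_lipschitz2 T p (fun s y => L (q s y)) (fun u w => u + tau * w) (1 + Rabs tau));
    [pose proof (Rabs_pos tau); lra | exact Cp
    | apply cont_on_comp; [exact Cq | apply continuity_pt_L] |].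
  intros a b c d.
  replace (a + tau * b - (c + tau * d)) with ((a - c) + tau * (b - d)) by ring.
  eapply Rle_trans; [apply Rabs_triang|]. rewrite Rabs_mult.
  pose proof (Rabs_pos tau). pose proof (Rabs_pos (a - c)). pose proof (Rabs_pos (b - d)). nra.
Qed.

Definition invariant_deviation (a b s y : R) : R :=
  Rmax (Rabs (rinv (-1) s y - a)) (Rabs (rinv 1 s y - b)).

Lemma cont_on_penalized_deviation a b delta :
  cont_on T (fun s y => invariant_deviation a b s y - delta * s).
Proof.
  assert (Cdev : cont_on T (invariant_deviation a b)).
  { apply (cont_on_lipschitz2 T _ _ (fun u w => Rmax (Rabs (u - a)) (Rabs (w - b))) 1);
      [lra | apply cont_on_riemann_invariant | apply cont_on_riemann_invariant |].
    intros u w u' w'. unfold Rmax, Rabs. repeat destruct Rle_dec; repeat destruct Rcase_abs; lra. }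
  apply (cont_on_lipschitz2 T _ _ (fun u s => u - delta * s) (1 + Rabs delta));
    [pose proof (Rabs_pos delta); lra | exact Cdev | apply cont_on_time |].
  intros u s u' s'.
  replace (u - delta * s - (u' - delta * s')) with ((u - u') - delta * (s - s')) by ring.
  eapply Rle_trans; [apply Rabs_triang|]. rewrite Rabs_Ropp, Rabs_mult.
  pose proof (Rabs_pos delta). pose proof (Rabs_pos (u - u')). pose proof (Rabs_pos (s - s')). nra.
Qed.

Lemma riemann_invariants_stay_close A B c t eps a b :
  in_dom T t -> 0 < eps -> 0 <= c ->
  (forall y, A <= y <= B -> invariant_deviation a b 0 y <= eps) ->
  (forall s y, in_dom T s -> invariant_deviation a b s y <= 2 * eps -> Q (q s y) < c) ->
  forall y, A + c * t <= y <= B - c * t -> invariant_deviation a b t y <= 2 * eps.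
Proof.
  intros ht heps hc Hinit Hspeed y hy. apply Rnot_lt_le. intros hbad.
  set (delta := eps / (2 * (t + 1))). pose proof (proj1 ht).
  assert (hdelta : 0 < delta) by (apply Rdiv_lt_0_compat; lra).
  assert (delta * (t + 1) = eps / 2) by (unfold delta; field; lra).
  assert (hdt : delta * t <= eps / 2) by nra.
  destruct (first_hitting_time T _ (3 * eps / 2) (cont_on_penalized_deviation a b delta) A B c t y)
    as [s1 [y1 [hs1 [hy1 [heq before]]]]]; auto.
  { intros y' hy'. specialize (Hinit y' hy'). lra. }
  { cbv beta. lra. }
  assert (hdev : invariant_deviation a b s1 y1 <= 2 * eps) by nra.
  assert (hd1 : in_dom T s1) by (apply (in_dom_le T _ t); auto; lra).
  assert (back : forall tau sigma alpha, tau = 1 \/ tau = -1 -> sigma = 1 \/ sigma = -1 ->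
      (forall s y, sigma * (rinv tau s y - alpha) <= invariant_deviation a b s y) ->
      sigma * (rinv tau s1 y1 - alpha) = invariant_deviation a b s1 y1 -> False).
  { intros tau sigma alpha htau hsig Hle Heq.
    apply (riemann_invariant_no_backward_max tau sigma s1 y1 c delta); auto; [lra|].
    intros h v hh hv. assert (hyv : A + c * (s1 - h) <= y1 + v * h <= B - c * (s1 - h))
      by (destruct hv as [-> | ->]; split; nra).
    specialize (before (s1 - h) (y1 + v * h) ltac:(lra) hyv).
    specialize (Hle (s1 - h) (y1 + v * h)).
    lra. }
  destruct (Rmax_abs_attained (rinv (-1) s1 y1 - a) (rinv 1 s1 y1 - b)) as [sigma [hsig [e1 | e2]]].
  - apply (back (-1) sigma a); auto.
    intros s y'. apply (signed_le_Rmax_abs sigma _ _ hsig).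
  - apply (back 1 sigma b); auto.
    intros s y'. apply (signed_le_Rmax_abs sigma _ _ hsig).
Qed.

Lemma solution_near_constant_state l A B t e : in_dom T t -> 0 < e -> (forall y, p 0 y = 0) ->
  (forall y, A <= y <= B -> Rabs (q 0 y - l) < Rmin (1 / 4) (e / 4) / (2 + Rabs l)) ->
  forall y, A + (2 + Rabs l) * t <= y <= B - (2 + Rabs l) * t ->
    Rabs (q t y - l) < e /\ Rabs (p t y) < e.
Proof.
  intros ht he Hp0 Hq0 y hy.
  set (e' := Rmin (1 / 4) (e / 4)) in *. set (c := 2 + Rabs l) in *.
  assert (he' : 0 < e') by (apply Rmin_pos; lra).
  assert (he'1 : e' <= 1 / 4) by apply Rmin_l. assert (he'2 : e' <= e / 4) by apply Rmin_r.
  assert (hc : 2 <= c) by (unfold c; pose proof (Rabs_pos l); lra).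
  assert (split_dev : forall s y d, invariant_deviation (- L l) (L l) s y <= d ->
      Rabs (p s y) <= d /\ Rabs (L (q s y) - L l) <= d).
  { intros s y' d Hd. unfold invariant_deviation, riemann_invariant in Hd.
    apply Rabs_le_of_sum_diff; eapply Rle_trans; [|exact Hd| |exact Hd].
    - replace (p s y' - (L (q s y') - L l)) with (p s y' + -1 * L (q s y') - - L l) by ring.
      apply Rmax_l.
    - replace (p s y' + (L (q s y') - L l)) with (p s y' + 1 * L (q s y') - L l) by ring.
      apply Rmax_r. }
  assert (init : forall y', A <= y' <= B -> invariant_deviation (- L l) (L l) 0 y' <= e').
  { intros y' hy'. specialize (Hq0 y' hy').
    assert (hq : Rabs (q 0 y' - l) * c <= e').
    { replace e' with (e' / c * c) by (field; lra). apply Rmult_le_compat_r; lra. }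
    assert (hL : Rabs (L (q 0 y') - L l) <= e').
    { eapply Rle_trans; [apply L_dist_le|].
      pose proof (Rabs_pos (q 0 y' - l)).
      assert (Rabs (q 0 y' - l) <= 1) by nra. unfold c in hq. nra. }
    unfold invariant_deviation, riemann_invariant. rewrite Hp0.
    replace (0 + -1 * L (q 0 y') - - L l) with (- (L (q 0 y') - L l)) by ring.
    replace (0 + 1 * L (q 0 y') - L l) with (L (q 0 y') - L l) by ring.
    rewrite Rabs_Ropp. now apply Rmax_lub. }
  assert (speed : forall s y', in_dom T s -> invariant_deviation (- L l) (L l) s y' <= 2 * e' ->
      Q (q s y') < c).
  { intros s y' _ Hd. destruct (split_dev s y' _ Hd) as [_ hL].
    pose proof (L_dist_ge (q s y') l). pose proof (Q_le_1_plus_abs (q s y')).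
    pose proof (Rabs_triang (q s y' - l) l). replace (q s y' - l + l) with (q s y') in * by ring.
    unfold c. lra. }
  destruct (split_dev t y (2 * e'))
    as [hp hL]; [apply (riemann_invariants_stay_close A B c); auto; lra|].
  pose proof (L_dist_ge (q t y) l). split; lra.
Qed.

Lemma solution_limits_p_infty (l t : R) : in_dom T t -> (forall y, p 0 y = 0) ->
  is_lim (fun y => q 0 y) p_infty l ->
  is_lim (fun y => q t y) p_infty l /\ is_lim (fun y => p t y) p_infty 0.
Proof.
  intros ht Hp0 Hl. apply is_lim_spec in Hl. unfold is_lim' in Hl.
  assert (tail : forall e, 0 < e ->
      exists M, forall y, M < y -> Rabs (q t y - l) < e /\ Rabs (p t y) < e).
  { intros e he.
    assert (heta : 0 < Rmin (1 / 4) (e / 4) / (2 + Rabs l))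
      by (apply Rdiv_lt_0_compat; [apply Rmin_pos | pose proof (Rabs_pos l)]; lra).
    destruct (Hl (mkposreal _ heta)) as [M HM].
    exists (M + 1 + (2 + Rabs l) * t). intros y hy.
    apply (solution_near_constant_state l (M + 1) (y + (2 + Rabs l) * t) t e); auto; [|lra].
    intros y' hy'. apply HM. lra. }
  split; apply is_lim_spec; intros [e he]; destruct (tail e he) as [M HM];
    exists M; intros y hy; simpl; [|rewrite Rminus_0_r]; now apply HM.
Qed.

Lemma solution_limits_m_infty (l t : R) : in_dom T t -> (forall y, p 0 y = 0) ->
  is_lim (fun y => q 0 y) m_infty l ->
  is_lim (fun y => q t y) m_infty l /\ is_lim (fun y => p t y) m_infty 0.
Proof.
  intros ht Hp0 Hl. apply is_lim_spec in Hl. unfold is_lim' in Hl.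
  assert (tail : forall e, 0 < e ->
      exists M, forall y, y < M -> Rabs (q t y - l) < e /\ Rabs (p t y) < e).
  { intros e he.
    assert (heta : 0 < Rmin (1 / 4) (e / 4) / (2 + Rabs l))
      by (apply Rdiv_lt_0_compat; [apply Rmin_pos | pose proof (Rabs_pos l)]; lra).
    destruct (Hl (mkposreal _ heta)) as [M HM].
    exists (M - 1 - (2 + Rabs l) * t). intros y hy.
    apply (solution_near_constant_state l (y - (2 + Rabs l) * t) (M - 1) t e); auto; [|lra].
    intros y' hy'. apply HM. lra. }
  split; apply is_lim_spec; intros [e he]; destruct (tail e he) as [M HM];
    exists M; intros y hy; simpl; [|rewrite Rminus_0_r]; now apply HM.
Qed.

End RiemannInvariants.

Theorem mainTheorem1
  (w0 dw0 ddw0 : R -> R) (lp lm : R) (T : Rbar) (w p q : R -> R -> R) :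
  (forall x, is_derive w0 x (dw0 x)) ->
  (forall x, is_derive dw0 x (ddw0 x)) ->
  (forall x, continuous ddw0 x) ->
  (exists M : R, forall x, Rabs (dw0 x) <= M) ->
  is_lim dw0 p_infty lp ->
  is_lim dw0 m_infty lm ->
  Rbar_lt 0 T ->
  classical_solution w0 T w p q ->
  forall t : R, in_dom T t ->
    is_lim (fun x => q t x) p_infty lp /\
    is_lim (fun x => q t x) m_infty lm /\
    is_lim (fun x => p t x) p_infty 0 /\
    is_lim (fun x => p t x) m_infty 0.
Proof.
  intros Hw0 _ _ _ Hlp Hlm HT
    [Hwt [Hwx [pt [px [qt [qx [Hpt [Hpx [Hqt [Hqx
      [_ [Cp [Cq [_ [Cpx [Cqt [Cqx [Hpde [Hw00 Hp0]]]]]]]]]]]]]]]]]]] t ht.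
  assert (Hsym := mixed_partials_commute T w p q px qt Hwt Hwx Hpx Hqt Cpx Cqt).
  assert (Hq0 : forall y, dw0 y = q 0 y).
  { intros y. rewrite <- (is_derive_unique _ _ _ (Hw0 y)). apply is_derive_unique.
    apply (is_derive_ext (fun y => w 0 y)); [intros; apply Hw00 |].
    apply Hwx. split; [lra | exact HT]. }
  apply (is_lim_ext _ (fun y => q 0 y)) in Hlp, Hlm; auto.
  destruct (solution_limits_p_infty T p q pt px qt qx Hpt Hpx Hqt Hqx Cp Cq Cpx Cqx Hpde Hsym
    lp t ht Hp0 Hlp).
  destruct (solution_limits_m_infty T p q pt px qt qx Hpt Hpx Hqt Hqx Cp Cq Cpx Cqx Hpde Hsym
    lm t ht Hp0 Hlm).
  tauto.
Qed.
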